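(* Let $m,n,d,P$ be positive integers with $P\ge mnd+n-1$, let $N_1,N_0,B$ be positive integers with $m\mid N_1$, $n\mid N_0$, $d\mid B$, and let $\bm{W}\in\mathbb{R}^{N_1\times N_0}$, $\bm{X}\in\mathbb{R}^{N_0\times B}$. Consider the Generalized PolyDot scheme for computing $\bm{S}=\bm{W}\bm{X}$ with $P$ nodes defined in the context. Then the recovery threshold of this scheme is $mnd+n-1$: from the computed outputs $\widetilde{\bm{S}}_p$ of any $mnd+n-1$ of the $P$ nodes, the whole product $\bm{S}=\bm{W}\bm{X}$ can be recovered. Consequently, the scheme tolerates up to $P-mnd-n+1$ erasures.
   Context: Block-partition $\bm{W}$ into an $m\times n$ grid of blocks $\bm{W}_{i,j}\in\mathbb{R}^{(N_1/m)\times(N_0/n)}$ and $\bm{X}$ into an $n\times d$ grid of blocks $\bm{X}_{j,k}\in\mathbb{R}^{(N_0/n)\times(B/d)}$, so that $\bm{S}=\bm{W}\bm{X}$ has an $m\times d$ grid of blocks $\bm{S}_{i,k}=\sum_{j=0}^{n-1}\bm{W}_{i,j}\bm{X}_{j,k}$. Define $\widetilde{\bm{W}}(u,v)=\sum_{i=0}^{m-1}\sum_{j=0}^{n-1}\bm{W}_{i,j}u^iv^j$ and $\widetilde{\bm{X}}(v,w)=\sum_{j=0}^{n-1}\sum_{k=0}^{d-1}\bm{X}_{j,k}v^{n-1-j}w^k$. Choose $P$ distinct real numbers $b_0,\dots,b_{P-1}$ and set $a_p=b_p^{\,n}$, $c_p=b_p^{\,mn}$. Node $p$ stores only $\widetilde{\bm{W}}(a_p,b_p)$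 (an $\frac{N_1}{m}\times\frac{N_0}{n}$ matrix) and $\widetilde{\bm{X}}(b_p,c_p)$ (an $\frac{N_0}{n}\times\frac{B}{d}$ matrix) and computes $\widetilde{\bm{S}}_p=\widetilde{\bm{W}}(a_p,b_p)\widetilde{\bm{X}}(b_p,c_p)$. The recovery threshold is the number of node outputs, out of $P$, that a decoder needs (from any subset of nodes of that size) to recover $\bm{S}$. *)

From mathcomp Require Import all_boot all_order all_algebra.
Set Implicit Arguments. Unset Strict Implicit. Unset Printing Implicit Defensive.
Import GRing.Theory Num.Theory.
Local Open Scope ring_scope.

Definition mxentry (R : nzRingType) (p q : nat) (A : 'M[R]_(p, q)) (i j : nat) : R :=
  match (insub i : option 'I_p), (insub j : option 'I_q) with
  | Some i', Some j' => A i' j'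
  | _, _ => 0
  end.

(* Block (i,j) of A : 'M_(p,q) partitioned into an a x b grid of blocks
   of size (p %/ a) x (q %/ b). *)
Definition mxblock_at (R : nzRingType) (p q a b : nat) (A : 'M[R]_(p, q)) (i j : nat)
  : 'M[R]_(p %/ a, q %/ b) :=
  \matrix_(r < p %/ a, c < q %/ b) mxentry A (i * (p %/ a) + r) (j * (q %/ b) + c).

Definition Wenc (R : nzRingType) (N1 N0 m n : nat) (W : 'M[R]_(N1, N0)) (u v : R)
  : 'M[R]_(N1 %/ m, N0 %/ n) :=
  \sum_(i < m) \sum_(j < n) (u ^+ i * v ^+ j) *: mxblock_at m n W i j.

Definition Xenc (R : nzRingType) (N0 B n d : nat) (X : 'M[R]_(N0, B)) (v w : R)
  : 'M[R]_(N0 %/ n, B %/ d) :=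
  \sum_(j < n) \sum_(k < d) (v ^+ (n - 1 - j) * w ^+ k) *: mxblock_at n d X j k.

Definition node_output (R : nzRingType) (N1 N0 B m n d : nat)
  (W : 'M[R]_(N1, N0)) (X : 'M[R]_(N0, B)) (bp : R) : 'M[R]_(N1 %/ m, B %/ d) :=
  Wenc m n W (bp ^+ n) bp *m Xenc n d X bp (bp ^+ (m * n)).

(* Substituting u = x^n, v = x, w = x^(mn) in W~(u, v) X~(v, w), entry (r, c)
   of the output of node p is the value at b_p of a polynomial in which the
   term W_{i,j} X_{j',k} carries the exponent n i + j + (n - 1 - j') + m n k.
   All these exponents are below mnd + n - 1, and n i + (n - 1) + m n k is
   reached exactly by the terms with j = j', whose sum is entry (r, c) of
   S_{i,k}. Any mnd + n - 1 distinct evaluation points determine such a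
   polynomial (their Vandermonde matrix is invertible), so S can be read off
   the coefficients of the interpolating polynomial. *)

From mathcomp Require Import all_boot all_order all_algebra zify.
Import GRing.Theory.
Set Implicit Arguments. Unset Strict Implicit.
Local Open Scope ring_scope.

Section Interpolation.

Variables (R : fieldType) (L : nat) (x : 'I_L -> R).

Definition interp (y : 'I_L -> R) : {poly R} :=
  rVpoly (\row_j y j *m invmx (Vandermonde L (\row_j x j))).

Lemma eq_interp (y y' : 'I_L -> R) : y =1 y' -> interp y = interp y'.
Proof. by move=> yy'; congr (rVpoly (_ *m _)); apply/rowP => j; rewrite !mxE. Qed.

Lemma poly_rV_Vandermonde (p : {poly R}) : (size p <= L)%N ->
  poly_rV p *m Vandermonde L (\row_j x j) = \row_j p.[x j].
Proof.
move=> sp; apply/rowP => j; rewrite !mxE (horner_coef_wide _ sp).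
by apply: eq_bigr => i _; rewrite !mxE.
Qed.

Lemma Vandermonde_unitmx : injective x -> Vandermonde L (\row_j x j) \in unitmx.
Proof.
move=> x_inj; rewrite unitmxE unitfE det_Vandermonde.
apply/prodf_neq0 => i _; apply/prodf_neq0 => j lt_ij.
by rewrite !mxE subr_eq0 (inj_eq x_inj) eq_sym neq_ltn lt_ij.
Qed.

Lemma interpK (p : {poly R}) : injective x -> (size p <= L)%N ->
  interp (fun j => p.[x j]) = p.
Proof.
move=> x_inj sp; rewrite /interp -poly_rV_Vandermonde //.
by rewrite mulmxK ?Vandermonde_unitmx ?poly_rV_K.
Qed.

End Interpolation.

Lemma mxentryE (R : nzRingType) p q (A : 'M[R]_(p, q)) (i : 'I_p) (j : 'I_q) :
  mxentry A i j = A i j.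
Proof. by rewrite /mxentry !valK. Qed.

Lemma big_ord_mul (R : Type) (idx : R) (op : Monoid.law idx) N a q (F : nat -> R) :
  N = (a * q)%N ->
  \big[op/idx]_(l < N) F l = \big[op/idx]_(j < a) \big[op/idx]_(l < q) F (j * q + l)%N.
Proof.
move=> ->; rewrite -(big_mkord xpredT) big_nat_mul big_mkord; apply: eq_bigr => j _.
rewrite -{1}[(j * q)%N]add0n big_addn mulSn addnK big_mkord.
by apply: eq_bigr => l _; rewrite addnC.
Qed.

Lemma mxblock_at_mul (R : nzRingType) p q s a b c
    (A : 'M[R]_(p, q)) (C : 'M[R]_(q, s))
    (i : 'I_a) (k : 'I_c) (r : 'I_(p %/ a)) (t : 'I_(s %/ c)) : (b %| q)%N ->
  mxentry (A *m C) (i * (p %/ a) + r) (k * (s %/ c) + t) =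
  \sum_(j < b) (mxblock_at a b A i j *m mxblock_at b c C j k) r t.
Proof.
move=> dvd_b_q.
have block_lt n e (u : 'I_e) (v : 'I_(n %/ e)) : (u * (n %/ e) + v < n)%N.
  have := leq_mul (ltn_ord u) (leqnn (n %/ e)); have := leq_trunc_div n e.
  by have := ltn_ord v; rewrite mulSn; lia.
rewrite -[(i * _ + _)%N]/(val (Ordinal (block_lt p a i r))).
rewrite -[(k * _ + _)%N]/(val (Ordinal (block_lt s c k t))) mxentryE mxE.
under eq_bigr do rewrite -[A _ _]mxentryE -[C _ _]mxentryE.
rewrite (big_ord_mul (a := b) (q := q %/ b) _
  (fun l => mxentry A (i * (p %/ a) + r) l * mxentry C l (k * (s %/ c) + t))); last first.
  by rewrite mulnC divnK.
by apply: eq_bigr => j _; rewrite mxE; apply: eq_bigr => l _; rewrite !mxE.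
Qed.

Lemma mulnD_ltn_inj n q q' r r' : (r < n)%N -> (r' < n)%N ->
  (n * q + r = n * q' + r')%N -> q = q' /\ r = r'.
Proof.
move=> lt_rn lt_r'n eq_qr; have n_gt0 : (0 < n)%N by case: n lt_rn {lt_r'n eq_qr}.
have := congr1 (divn^~ n) eq_qr; have := congr1 (modn^~ n) eq_qr.
by rewrite ![(n * _)%N]mulnC !modnMDl !divnMDl // !modn_small // !divn_small // !addn0.
Qed.

Lemma polydot_exponent_eq m n i i0 j j' k k0 :
  (i < m)%N -> (i0 < m)%N -> (j < n)%N -> (j' < n)%N ->
  (n * i0 + (n - 1) + m * n * k0 == n * i + j + (n - 1 - j') + m * n * k)%N
  = [&& i == i0, j' == j & k == k0].
Proof.
move=> lt_im lt_i0m lt_jn lt_j'n.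
apply/eqP/and3P => [eq_e|[/eqP-> /eqP-> /eqP->]]; last by lia.
have [eq_q ->] : ((i + m * k = i0 + m * k0)%N /\ j = j').
  by apply: (@mulnD_ltn_inj n) => //; lia.
have [-> ->] : k = k0 /\ i = i0 by apply: (@mulnD_ltn_inj m) => //; lia.
by split.
Qed.

Lemma polydot_exponent_lt m n d i j j' k : (i < m)%N -> (j < n)%N -> (k < d)%N ->
  (n * i + j + (n - 1 - j') + m * n * k < m * n * d + n - 1)%N.
Proof.
move=> lt_im lt_jn lt_kd.
have := leq_mul (leqnn n) lt_im; have := leq_mul (leqnn (m * n)) lt_kd.
by rewrite !mulnS; lia.
Qed.

Section PolyDotPolynomial.

Variables (R : comNzRingType) (m n d N1 N0 B : nat).
Variables (W : 'M[R]_(N1, N0)) (X : 'M[R]_(N0, B)).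
Variables (r : 'I_(N1 %/ m)) (c : 'I_(B %/ d)).

Definition polydot_poly : {poly R} :=
  \sum_(i < m) \sum_(j < n) \sum_(j' < n) \sum_(k < d)
    (mxblock_at m n W i j *m mxblock_at n d X j' k) r c
      *: 'X^(n * i + j + (n - 1 - j') + m * n * k).

Lemma horner_polydot_poly x : polydot_poly.[x] = node_output m n d W X x r c.
Proof.
rewrite /node_output /Wenc /Xenc /polydot_poly mulmx_suml summxE horner_sum.
apply: eq_bigr => i _; rewrite mulmx_suml summxE horner_sum.
apply: eq_bigr => j _; rewrite mulmx_sumr summxE horner_sum.
apply: eq_bigr => j' _; rewrite mulmx_sumr summxE horner_sum.
apply: eq_bigr => k _; rewrite -scalemxAl -scalemxAr !mxE hornerZ hornerXn.
by rewrite !exprD -!exprM mulrC !mulrA.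
Qed.

Lemma size_polydot_poly : (size polydot_poly <= m * n * d + n - 1)%N.
Proof.
do 4 (apply: leq_trans (size_sum _ _ _) _; apply/bigmax_leqP => ? _).
by rewrite (leq_trans (size_scale_leq _ _)) // size_polyXn polydot_exponent_lt.
Qed.

Lemma coef_polydot_poly e : polydot_poly`_e =
  \sum_(i < m) \sum_(j < n) \sum_(j' < n) \sum_(k < d)
    (mxblock_at m n W i j *m mxblock_at n d X j' k) r c
      * (e == n * i + j + (n - 1 - j') + m * n * k)%N%:R.
Proof. by do 4 (rewrite coef_sum; apply: eq_bigr => ? _); rewrite coefZ coefXn. Qed.

Lemma coef_polydot_poly_diag (i0 : 'I_m) (k0 : 'I_d) :
  polydot_poly`_(n * i0 + (n - 1) + m * n * k0) =
  \sum_(j < n) (mxblock_at m n W i0 j *m mxblock_at n d X j k0) r c.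
Proof.
rewrite coef_polydot_poly.
under eq_bigr => i _ do under eq_bigr => j _ do under eq_bigr => j' _ do
  under eq_bigr => k _ do rewrite polydot_exponent_eq // !val_eqE.
rewrite (big_only1 i0) // => [|i /negbTE ne_i _]; last first.
  by do 3 (apply: big1 => ? _); rewrite ne_i mulr0.
apply: eq_bigr => j _; rewrite (big_only1 j) // => [|j' /negbTE ne_j _]; last first.
  by apply: big1 => ? _; rewrite ne_j andbF mulr0.
rewrite (big_only1 k0) // => [|k /negbTE ne_k _]; last by rewrite ne_k !andbF mulr0.
by rewrite !eqxx mulr1.
Qed.

End PolyDotPolynomial.

Lemma block_index_lt k N a : (k < N)%N -> (a %| N)%N ->
  (k %/ (N %/ a) < a)%N /\ (k %% (N %/ a) < N %/ a)%N.
Proof.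
move=> lt_kN dvd_aN; have q_gt0 : (0 < N %/ a)%N by nia.
by rewrite ltn_divLR // mulnC divnK // ltn_pmod.
Qed.

Definition polydot_decode (R : fieldType) (m n d N1 B L : nat) (x : 'I_L -> R)
    (f : 'I_L -> 'M[R]_(N1 %/ m, B %/ d)) : 'M[R]_(N1, B) :=
  \matrix_(s, t)
    (interp x (fun j => mxentry (f j) (s %% (N1 %/ m)) (t %% (B %/ d))))`_
      (n * (s %/ (N1 %/ m)) + (n - 1) + m * n * (t %/ (B %/ d))).

Arguments polydot_decode {R} m n d {N1 B L} x f.

Lemma eq_polydot_decode (R : fieldType) (m n d N1 B L : nat) (x : 'I_L -> R)
    (f g : 'I_L -> 'M[R]_(N1 %/ m, B %/ d)) :
  f =1 g -> polydot_decode m n d x f = polydot_decode m n d x g.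
Proof.
move=> eq_fg; apply/matrixP => s t; rewrite !mxE.
by rewrite (@eq_interp _ _ x _
  (fun j => mxentry (g j) (s %% (N1 %/ m)) (t %% (B %/ d)))) // => j; rewrite eq_fg.
Qed.

Lemma polydot_decodeK (R : fieldType) (m n d N1 N0 B L : nat)
    (W : 'M[R]_(N1, N0)) (X : 'M[R]_(N0, B)) (x : 'I_L -> R) :
  injective x -> (m * n * d + n - 1 <= L)%N ->
  (m %| N1)%N -> (n %| N0)%N -> (d %| B)%N ->
  polydot_decode m n d x (fun j => node_output m n d W X (x j)) = W *m X.
Proof.
move=> x_inj le_L dvd_m dvd_n dvd_d; apply/matrixP => s t; rewrite mxE.
have [lt_i lt_r] := block_index_lt (ltn_ord s) dvd_m.
have [lt_k lt_c] := block_index_lt (ltn_ord t) dvd_d.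
rewrite (@eq_interp _ _ _ _
  (fun j => (polydot_poly n W X (Ordinal lt_r) (Ordinal lt_c)).[x j])); last first.
  by move=> j; rewrite horner_polydot_poly -mxentryE.
rewrite interpK //; last exact: leq_trans (size_polydot_poly _ _ _ _ _) le_L.
rewrite -[(s %/ _)%N]/(val (Ordinal lt_i)) -[(t %/ _)%N]/(val (Ordinal lt_k)).
by rewrite coef_polydot_poly_diag -mxblock_at_mul //= -!divn_eq mxentryE.
Qed.

Theorem theorem2 (R : realFieldType) (m n d P N1 N0 B : nat)
  (hm : (0 < m)%N) (hn : (0 < n)%N) (hd : (0 < d)%N) (hP0 : (0 < P)%N)
  (hP : (m * n * d + n - 1 <= P)%N)
  (hN1 : (0 < N1)%N) (hN0 : (0 < N0)%N) (hB : (0 < B)%N)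
  (hmN1 : (m %| N1)%N) (hnN0 : (n %| N0)%N) (hdB : (d %| B)%N)
  (b : 'I_P -> R) (hb : injective b)
  (K : {set 'I_P}) (hK : #|K| = (m * n * d + n - 1)%N) :
  exists D : ('I_P -> 'M[R]_(N1 %/ m, B %/ d)) -> 'M[R]_(N1, B),
    (forall f g : 'I_P -> 'M[R]_(N1 %/ m, B %/ d),
        {in K, forall p, f p = g p} -> D f = D g) /\
    (forall (W : 'M[R]_(N1, N0)) (X : 'M[R]_(N0, B)),
        D (fun p => node_output m n d W X (b p)) = W *m X).
Proof.
pose e : 'I_#|K| -> 'I_P := enum_val.
exists (fun f => polydot_decode m n d (b \o e) (f \o e)); split.
- move=> f g eq_fg; apply: eq_polydot_decode => j /=.
  by rewrite eq_fg // enum_valP.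
- move=> W X; apply: polydot_decodeK; rewrite ?hK //.
  by move=> i j /hb /enum_val_inj.
Qed.
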